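(* Assume Second-order Absolute Morley. Then for every lightface projective set $A\subseteq 2^\omega$, either $|A|\leq\aleph_1$ or $A$ contains a perfect set.
   Context: Second-order Absolute Morley is the statement: for every second-order theory $T$ in a countable signature, either $T$ has at most $\aleph_1$ isomorphism classes of countable models, or there is a perfect set of pairwise non-isomorphic countable models of $T$. Here countable models with universe $\omega$ are identified with points of a Cantor space via the values of their relations (product topology), so ''perfect set of models'' means a nonempty closed set without isolated points in this space of codes; equivalently a continuous injection of $2^\omega$ into the space of models of $T$ whose images are pairwise non-isomorphic. A set $A\subseteq 2^\omega$ is lightface projective if it is definable over second-order arithmetic by a projective formula without real parameters. A perfect set is a nonempty closed subset of $2^\omega$ without isolated points. *)

From Stdlib Require Import Arith List.
From Stdlib Require Vector.

Set Implicit Arguments.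

Definition countable (X : Type) : Prop :=
  exists f : X -> nat, forall a b, f a = f b -> a = b.

Definition strict_well_order {W : Type} (lt : W -> W -> Prop) : Prop :=
  well_founded lt /\
  (forall a b c, lt a b -> lt b c -> lt a c) /\
  (forall a b, lt a b \/ a = b \/ lt b a).

(* A well-order all of whose proper initial segments are countable,
   i.e. a well-order of order type <= omega_1. *)
Definition omega1_like {W : Type} (lt : W -> W -> Prop) : Prop :=
  strict_well_order lt /\ forall w, countable {u : W | lt u w}.

Definition card_le_aleph1 {X : Type} (P : X -> Prop) : Prop :=
  exists (W : Type) (lt : W -> W -> Prop), omega1_like lt /\
    exists f : X -> W, forall a b, P a -> P b -> f a = f b -> a = b.

Definition classes_le_aleph1 {X : Type} (P : X -> Prop) (E : X -> X -> Prop) : Prop :=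
  exists (W : Type) (lt : W -> W -> Prop), omega1_like lt /\
    exists f : X -> W, forall a b, P a -> P b -> f a = f b -> E a b.

Definition cantor := nat -> bool.

Definition agree_upto (n : nat) (x y : cantor) : Prop :=
  forall i, i < n -> x i = y i.

Definition closed_cantor (P : cantor -> Prop) : Prop :=
  forall x, (forall n, exists y, P y /\ agree_upto n x y) -> P x.

Definition no_isolated_cantor (P : cantor -> Prop) : Prop :=
  forall x, P x -> forall n, exists y, P y /\ y <> x /\ agree_upto n x y.

Definition perfect_cantor (P : cantor -> Prop) : Prop :=
  (exists x, P x) /\ closed_cantor P /\ no_isolated_cantor P.

Record signature : Type := {
  sym : Type;
  arity : sym -> nat;
  sym_countable : countable sym
}.

Definition structure (S : signature) : Type :=
  forall s : sym S, Vector.t nat (arity S s) -> bool.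

(* atomic facts R(a_1..a_k); the space of structures carries the product
   topology on 2^{atoms}, which is the Cantor-space topology on codes *)
Definition atom (S : signature) : Type :=
  {s : sym S & Vector.t nat (arity S s)}.

Definition agree_on (S : signature) (L : list (atom S)) (M N : structure S) : Prop :=
  forall a, List.In a L -> M (projT1 a) (projT2 a) = N (projT1 a) (projT2 a).

Definition closed_struct (S : signature) (P : structure S -> Prop) : Prop :=
  forall M, (forall L, exists N, P N /\ agree_on L M N) -> P M.

Definition no_isolated_struct (S : signature) (P : structure S -> Prop) : Prop :=
  forall M, P M -> forall L, exists N, P N /\ N <> M /\ agree_on L M N.

Definition perfect_struct (S : signature) (P : structure S -> Prop) : Prop :=
  (exists M, P M) /\ closed_struct P /\ no_isolated_struct P.

Definition bijective_nat (h : nat -> nat) : Prop :=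
  (forall a b, h a = h b -> a = b) /\ (forall b, exists a, h a = b).

Definition iso (S : signature) (M N : structure S) : Prop :=
  exists h : nat -> nat, bijective_nat h /\
    forall s v, M s v = N s (Vector.map h v).

(* First-order variables are numbered; second-order relation variables of
   arity k are numbered separately for each k. *)

Inductive so_formula (S : signature) : Type :=
| SRel (s : sym S) (xs : Vector.t nat (arity S s))
| SVar (k : nat) (X : nat) (xs : Vector.t nat k)
| SEq (x y : nat)
| SNot (phi : so_formula S)
| SAnd (phi psi : so_formula S)
| SAll1 (x : nat) (phi : so_formula S)
| SAll2 (k : nat) (X : nat) (phi : so_formula S).

Arguments SRel {S}.
Arguments SVar {S}.
Arguments SEq {S}.
Arguments SNot {S}.
Arguments SAnd {S}.
Arguments SAll1 {S}.
Arguments SAll2 {S}.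

Definition env1 := nat -> nat.
Definition env2 := forall k : nat, nat -> Vector.t nat k -> Prop.

Definition upd1 (e : env1) (x a : nat) : env1 :=
  fun y => if Nat.eqb y x then a else e y.

Definition upd2 (e : env2) (k X : nat) (R : Vector.t nat k -> Prop) : env2 :=
  fun j => match Nat.eq_dec k j with
           | left H => eq_rect k (fun j => nat -> Vector.t nat j -> Prop)
                         (fun Y => if Nat.eqb Y X then R else e k Y) j H
           | right _ => e j
           end.

(* Full (standard) semantics: second-order quantifiers range over all relations *)
Fixpoint so_sat (S : signature) (M : structure S) (e1 : env1) (e2 : env2)
  (phi : so_formula S) : Prop :=
  match phi with
  | SRel s xs => M s (Vector.map e1 xs) = true
  | SVar k X xs => e2 k X (Vector.map e1 xs)
  | SEq x y => e1 x = e1 y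
  | SNot p => ~ so_sat M e1 e2 p
  | SAnd p q => so_sat M e1 e2 p /\ so_sat M e1 e2 q
  | SAll1 x p => forall a : nat, so_sat M (upd1 e1 x a) e2 p
  | SAll2 k X p => forall R : Vector.t nat k -> Prop, so_sat M e1 (@upd2 e2 k X R) p
  end.

Definition so_model (S : signature) (T : so_formula S -> Prop) (M : structure S) : Prop :=
  forall phi, T phi -> forall e1 e2, so_sat M e1 e2 phi.

Definition SecondOrderAbsoluteMorley : Prop :=
  forall (S : signature) (T : so_formula S -> Prop),
    classes_le_aleph1 (so_model T) (@iso S) \/
    exists P : structure S -> Prop,
      perfect_struct P /\
      (forall M, P M -> so_model T M) /\
      (forall M N, P M -> P N -> M <> N -> ~ iso M N).

Inductive aterm : Type :=
| AVar (n : nat)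
| AZero
| ASucc (t : aterm)
| APlus (t u : aterm)
| AMult (t u : aterm).

Inductive aform : Type :=
| AEq (t u : aterm)
| ALt (t u : aterm)
| AMem (t : aterm) (X : nat)
| ANot (phi : aform)
| AAnd (phi psi : aform)
| AAllN (n : nat) (phi : aform)
| AAllS (X : nat) (phi : aform).

Fixpoint aeval (e : nat -> nat) (t : aterm) : nat :=
  match t with
  | AVar n => e n
  | AZero => 0
  | ASucc t => S (aeval e t)
  | APlus t u => aeval e t + aeval e u
  | AMult t u => aeval e t * aeval e u
  end.

Fixpoint asat (e1 : nat -> nat) (e2 : nat -> nat -> Prop) (phi : aform) : Prop :=
  match phi with
  | AEq t u => aeval e1 t = aeval e1 u
  | ALt t u => aeval e1 t < aeval e1 u
  | AMem t X => e2 X (aeval e1 t)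
  | ANot p => ~ asat e1 e2 p
  | AAnd p q => asat e1 e2 p /\ asat e1 e2 q
  | AAllN n p => forall a : nat, asat (fun m => if Nat.eqb m n then a else e1 m) e2 p
  | AAllS X p => forall Y : nat -> Prop,
      asat e1 (fun Z => if Nat.eqb Z X then Y else e2 Z) p
  end.

(* A is lightface projective: defined in second-order arithmetic by a formula
   with no real parameters; the real x is assigned to set variable 0
   (other free variables get the definable defaults 0 and the empty set). *)
Definition lightface_projective (A : cantor -> Prop) : Prop :=
  exists phi : aform, forall x : cantor,
    A x <-> asat (fun _ => 0) (fun X n => if Nat.eqb X 0 then x n = true else False) phi.

(* Code a real x by the standard model of arithmetic expanded by x.  Full
   second-order Peano arithmetic, together with axioms tying the bits of x to
   the expansion, is categorical, so for a lightface projective A defined by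
   phi, the models of "PA2 + x satisfies phi" are, up to isomorphism, exactly
   the codes of the reals of A, and non-isomorphic models carry different
   reals.  If there are at most aleph_1 isomorphism classes, A injects into
   them.  Otherwise a perfect set of pairwise non-isomorphic models is mapped,
   continuously and injectively, onto a subset of A; its image is closed by
   compactness of the space of structures and has no isolated points, hence is
   perfect. *)

From Stdlib Require Import Arith List Lia Classical ClassicalEpsilon FunctionalExtensionality.
From Stdlib Require Import Eqdep_dec Cantor.
From Stdlib Require Vector VectorSpec.

Notation vnil := (Vector.nil nat).
Notation vcons a v := (Vector.cons nat a _ v).

Lemma vector0_nil (v : Vector.t nat 0) : v = vnil.
Proof. apply (Vector.case0 (fun v => v = vnil)). reflexivity. Qed.

Lemma vectorS_cons n (v : Vector.t nat (S n)) : exists a w, v = vcons a w.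
Proof. apply (Vector.caseS' v). eauto. Qed.

Section Connectives.
Variable S : signature.

Definition SEx (x : nat) (p : so_formula S) := SNot (SAll1 x (SNot p)).
Definition SImp (p q : so_formula S) := SNot (SAnd p (SNot q)).
Definition SIff (p q : so_formula S) := SAnd (SImp p q) (SImp q p).
Definition SFalse : so_formula S := SNot (SEq 0 0).

Variable M : structure S.

Lemma sat_SEx e1 e2 x p :
  so_sat M e1 e2 (SEx x p) <-> exists a, so_sat M (upd1 e1 x a) e2 p.
Proof.
  simpl. split.
  - intro H. apply NNPP. intro H'. apply H. intros a Ha. apply H'. eauto.
  - intros [a Ha] H. exact (H a Ha).
Qed.

Lemma sat_SImp e1 e2 p q :
  so_sat M e1 e2 (SImp p q) <-> (so_sat M e1 e2 p -> so_sat M e1 e2 q).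
Proof.
  simpl. split.
  - intros H Hp. apply NNPP. intro. apply H; auto.
  - intros H [Hp Hq]. auto.
Qed.

Lemma sat_SIff e1 e2 p q :
  so_sat M e1 e2 (SIff p q) <-> (so_sat M e1 e2 p <-> so_sat M e1 e2 q).
Proof.
  change (so_sat M e1 e2 (SImp p q) /\ so_sat M e1 e2 (SImp q p) <->
          (so_sat M e1 e2 p <-> so_sat M e1 e2 q)).
  rewrite !sat_SImp. tauto.
Qed.

Lemma sat_SFalse e1 e2 : ~ so_sat M e1 e2 SFalse.
Proof. simpl. auto. Qed.
End Connectives.

Arguments SEx {S}.
Arguments SImp {S}.
Arguments SIff {S}.
Arguments SFalse {S}.

Lemma upd1_same e x a : upd1 e x a x = a.
Proof. unfold upd1. rewrite Nat.eqb_refl. reflexivity. Qed.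

Lemma upd1_other e x a y : y <> x -> upd1 e x a y = e y.
Proof. unfold upd1. intro H. destruct (Nat.eqb_spec y x); congruence. Qed.

Lemma upd2_same_arity e2 k X (R : Vector.t nat k -> Prop) Y :
  @upd2 e2 k X R k Y = if Nat.eqb Y X then R else e2 k Y.
Proof.
  unfold upd2. destruct (Nat.eq_dec k k) as [H|H]; [|congruence].
  rewrite (UIP_refl_nat _ H). reflexivity.
Qed.

Lemma upd2_other_arity e2 k X (R : Vector.t nat k -> Prop) j :
  k <> j -> @upd2 e2 k X R j = e2 j.
Proof. unfold upd2. destruct (Nat.eq_dec k j); congruence. Qed.

Lemma bijective_nat_inverse h :
  bijective_nat h -> exists g, (forall a, g (h a) = a) /\ (forall b, h (g b) = b).
Proof.
  intros [h_inj h_surj].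
  exists (fun b => proj1_sig (constructive_indefinite_description _ (h_surj b))).
  assert (K : forall b, h (proj1_sig (constructive_indefinite_description _ (h_surj b))) = b)
    by (intro b; exact (proj2_sig (constructive_indefinite_description _ (h_surj b)))).
  split; [|exact K]. intro a. apply h_inj. apply K.
Qed.

Lemma bijective_nat_of_inverse h g :
  (forall a, g (h a) = a) -> (forall b, h (g b) = b) -> bijective_nat h.
Proof.
  intros gh hg. split.
  - intros a b E. rewrite <- (gh a), <- (gh b), E. reflexivity.
  - intro b. exists (g b). apply hg.
Qed.

Section IsoInvariance.
Variable S : signature.
Variables M N : structure S.
Variables h g : nat -> nat.
Hypothesis gh : forall a, g (h a) = a.
Hypothesis hg : forall b, h (g b) = b.
Hypothesis hMN : forall s v, M s v = N s (Vector.map h v).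

Definition env2_transport (e2 e2' : env2) :=
  forall k X w, e2 k X w <-> e2' k X (Vector.map h w).

Lemma env2_transport_upd2 e2 e2' k X (R : Vector.t nat k -> Prop) R' :
  env2_transport e2 e2' -> (forall w, R w <-> R' (Vector.map h w)) ->
  env2_transport (@upd2 e2 k X R) (@upd2 e2' k X R').
Proof.
  intros He HR j Y w. destruct (Nat.eq_dec k j) as [<-|Hkj].
  - rewrite !upd2_same_arity. destruct (Nat.eqb Y X); auto.
  - rewrite !upd2_other_arity by exact Hkj. apply He.
Qed.

Lemma so_sat_transport phi : forall e1 e1' e2 e2',
  (forall y, e1' y = h (e1 y)) -> env2_transport e2 e2' ->
  (so_sat M e1 e2 phi <-> so_sat N e1' e2' phi).
Proof.
  assert (map_e1 : forall e1 e1' n (xs : Vector.t nat n), (forall y, e1' y = h (e1 y)) ->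
            Vector.map e1' xs = Vector.map h (Vector.map e1 xs)).
  { intros e1 e1' n xs He. rewrite VectorSpec.map_map. apply VectorSpec.map_ext. auto. }
  induction phi; intros e1 e1' e2 e2' He1 He2; cbn [so_sat].
  - rewrite hMN, (map_e1 e1 e1'); tauto.
  - rewrite (map_e1 e1 e1'); auto.
  - rewrite !He1. split; [congruence|]. intro E. rewrite <- (gh (e1 x)), E. apply gh.
  - rewrite (IHphi e1 e1' e2 e2'); tauto.
  - rewrite (IHphi1 e1 e1' e2 e2'), (IHphi2 e1 e1' e2 e2'); tauto.
  - assert (Hupd : forall a y, upd1 e1' x (h a) y = h (upd1 e1 x a y)).
    { intros a y. unfold upd1. destruct (Nat.eqb y x); auto. }
    split.
    + intros H b. rewrite <- (hg b).
      exact (proj1 (IHphi _ _ e2 e2' (Hupd (g b)) He2) (H (g b))).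
    + intros H a. exact (proj2 (IHphi _ _ e2 e2' (Hupd a) He2) (H (h a))).
  - split.
    + intros H R'.
      refine (proj1 (IHphi e1 e1' (@upd2 e2 k X (fun w => R' (Vector.map h w))) _ He1 _) (H _)).
      apply env2_transport_upd2; tauto.
    + intros H R.
      refine (proj2 (IHphi e1 e1' _ (@upd2 e2' k X (fun w => R (Vector.map g w))) He1 _) (H _)).
      apply env2_transport_upd2; auto.
      intro w. rewrite VectorSpec.map_map.
      erewrite VectorSpec.map_ext by apply gh. rewrite VectorSpec.map_id. tauto.
Qed.
End IsoInvariance.

Lemma iso_sym S (M N : structure S) : iso M N -> iso N M.
Proof.
  intros [h [Hh hMN]]. destruct (bijective_nat_inverse h Hh) as [g [gh hg]].
  exists g. split; [exact (bijective_nat_of_inverse g h hg gh)|].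
  intros s v. rewrite hMN, VectorSpec.map_map.
  erewrite VectorSpec.map_ext by apply hg. rewrite VectorSpec.map_id. reflexivity.
Qed.

Lemma iso_trans S (M N O : structure S) : iso M N -> iso N O -> iso M O.
Proof.
  intros [h1 [H1 hMN]] [h2 [H2 hNO]].
  destruct (bijective_nat_inverse h1 H1) as [g1 [gh1 hg1]].
  destruct (bijective_nat_inverse h2 H2) as [g2 [gh2 hg2]].
  exists (fun a => h2 (h1 a)). split.
  - apply (bijective_nat_of_inverse _ (fun c => g1 (g2 c))); intro;
      rewrite ?gh2, ?gh1, ?hg1, ?hg2; reflexivity.
  - intros s v. rewrite hMN, hNO, VectorSpec.map_map. reflexivity.
Qed.

Lemma so_model_iso S (T : so_formula S -> Prop) (M N : structure S) :
  iso M N -> so_model T M -> so_model T N.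
Proof.
  intros [h [Hh hMN]] HM phi Hphi e1' e2'.
  destruct (bijective_nat_inverse h Hh) as [g [gh hg]].
  refine (proj1 (so_sat_transport S M N h g gh hg hMN phi (fun y => g (e1' y)) e1'
           (fun k X w => e2' k X (Vector.map h w)) e2' _ _) (HM phi Hphi _ _)).
  - intro y. symmetry. apply hg.
  - intros k X w. reflexivity.
Qed.

Fixpoint list_code (l : list nat) : nat :=
  match l with nil => 0 | a :: l => S (Cantor.to_nat (a, list_code l)) end.

Lemma list_code_inj l l' : list_code l = list_code l' -> l = l'.
Proof.
  revert l'. induction l; destruct l'; cbn [list_code]; intro E; try congruence.
  apply eq_add_S, Cantor.to_nat_inj in E. injection E as -> E. f_equal. auto.
Qed.

Lemma atom_countable (S : signature) : countable (atom S).
Proof.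
  destruct (sym_countable S) as [c c_inj].
  exists (fun a => Cantor.to_nat (c (projT1 a), list_code (Vector.to_list (projT2 a)))).
  intros [s v] [s' v']. cbn [projT1 projT2]. intro E.
  apply Cantor.to_nat_inj in E. injection E as E1 E2. apply c_inj in E1. subst s'.
  apply list_code_inj, VectorSpec.to_list_inj in E2. subst. reflexivity.
Qed.

Lemma codes_bounded X (code : X -> nat) (L : list X) :
  exists k, forall a, In a L -> code a < k.
Proof.
  induction L as [|x L [k Hk]].
  - exists 0. simpl. tauto.
  - exists (S (max k (code x))). intros a [<-|Ha]; [|specialize (Hk a Ha)]; lia.
Qed.

Section Compactness.
Variable X : Type.
Variable code : X -> nat.
Hypothesis code_inj : forall a b, code a = code b -> a = b.
Variable P : (X -> bool) -> Prop.
Hypothesis P_closed : forall g,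
  (forall L : list X, exists h, P h /\ forall a, In a L -> h a = g a) -> P g.
Variable R : nat -> (X -> bool) -> Prop.
Hypothesis R_antitone : forall n m g, n <= m -> R m g -> R n g.
Variable D : nat -> list X.
Hypothesis R_local : forall n g g', (forall a, In a (D n) -> g a = g' a) -> R n g -> R n g'.
Hypothesis R_meets_P : forall n, exists h, P h /\ R n h.

(* Points are handled through their values on codes: [approx k] fixes the
   values on the codes below [k] one at a time, keeping them extendable, as in
   Koenig's lemma. *)
Definition extendable k (c : nat -> bool) :=
  forall m, exists h, P h /\ R m h /\ forall a, code a < k -> h a = c (code a).

Definition set_bit (c : nat -> bool) k (b : bool) : nat -> bool :=
  fun j => if Nat.eqb j k then b else c j.

Lemma extendable_step k c : extendable k c ->
  extendable (S k) (set_bit c k true) \/ extendable (S k) (set_bit c k false).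
Proof.
  intro Hc. apply NNPP. intro H. apply not_or_and in H. destruct H as [H1 H2].
  apply not_all_ex_not in H1 as [m1 H1]. apply not_all_ex_not in H2 as [m2 H2].
  destruct (Hc (max m1 m2)) as [h [Ph [Rh Eh]]].
  assert (Rh1 : R m1 h) by (apply (R_antitone m1 (max m1 m2)); auto; lia).
  assert (Rh2 : R m2 h) by (apply (R_antitone m2 (max m1 m2)); auto; lia).
  assert (agree : forall b, (forall a, code a = k -> h a = b) ->
            forall a, code a < S k -> h a = set_bit c k b (code a)).
  { intros b Hb a Ha. unfold set_bit. destruct (Nat.eqb_spec (code a) k); auto.
    apply Eh. lia. }
  destruct (classic (exists a0, code a0 = k)) as [[a0 Ha0]|Hn].
  - assert (Hb : forall a, code a = k -> h a = h a0)
      by (intros a Ha; rewrite (code_inj a a0) by congruence; reflexivity).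
    destruct (h a0) eqn:E; [apply H1 | apply H2]; exists h; auto.
  - apply H1. exists h. repeat split; auto.
    apply agree. intros a Ha. exfalso. eauto.
Qed.

Fixpoint approx (k : nat) : nat -> bool :=
  match k with
  | 0 => fun _ => false
  | S k => if excluded_middle_informative (extendable (S k) (set_bit (approx k) k true))
           then set_bit (approx k) k true else set_bit (approx k) k false
  end.

Lemma approx_extendable k : extendable k (approx k).
Proof.
  induction k as [|k IHk].
  - intro m. destruct (R_meets_P m) as [h [Ph Rh]]. exists h. repeat split; auto. lia.
  - simpl. destruct (excluded_middle_informative _); auto.
    destruct (extendable_step _ _ IHk); tauto.
Qed.

Lemma approx_stable k j : j < k -> approx k j = approx (S j) j.
Proof.
  induction k as [|k IHk]; intro Hj; [lia|].
  destruct (Nat.eq_dec j k) as [->|Hjk]; auto.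
  rewrite <- IHk by lia. simpl.
  destruct (excluded_middle_informative _); unfold set_bit;
    destruct (Nat.eqb_spec j k); congruence.
Qed.

Definition approx_limit (a : X) : bool := approx (S (code a)) (code a).

Lemma approx_limit_meets L m :
  exists h, P h /\ R m h /\ forall a, In a L -> h a = approx_limit a.
Proof.
  destruct (codes_bounded X code L) as [k Hk].
  destruct (approx_extendable k m) as [h [Ph [Rh Eh]]].
  exists h. repeat split; auto. intros a Ha.
  rewrite Eh by auto. apply approx_stable. auto.
Qed.

Lemma closed_meets_nested_clopens : exists g, P g /\ forall n, R n g.
Proof.
  exists approx_limit. split.
  - apply P_closed. intro L.
    destruct (approx_limit_meets L 0) as [h [Ph [_ Eh]]]. eauto.
  - intro n. destruct (approx_limit_meets (D n) n) as [h [_ [Rh Eh]]].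
    exact (R_local n h _ Eh Rh).
Qed.
End Compactness.

(* Beside the arithmetic relations, a real [x] is coded twice: by the unary
   relation [RealSym] (x as a set of elements of the universe) and by the
   nullary symbols [BitSym n] (the bits of x).  The nullary copy makes the
   real of a structure a continuous function of its code; the axioms [bit_link]
   identify the two copies. *)
Inductive asym := BitSym (n : nat) | ZeroSym | SuccSym | PlusSym | TimesSym | RealSym.

Definition asym_arity (s : asym) : nat :=
  match s with
  | BitSym _ => 0 | ZeroSym => 1 | SuccSym => 2 | PlusSym => 3 | TimesSym => 3 | RealSym => 1
  end.

Definition asym_code (s : asym) : nat :=
  match s with
  | BitSym n => 5 + n | ZeroSym => 0 | SuccSym => 1 | PlusSym => 2 | TimesSym => 3 | RealSym => 4
  end.

Lemma asym_code_inj a b : asym_code a = asym_code b -> a = b.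
Proof. destruct a, b; simpl; intro H; try reflexivity; try lia; f_equal; lia. Qed.

Definition arith_sig : signature :=
  {| sym := asym; arity := asym_arity; sym_countable := ex_intro _ asym_code asym_code_inj |}.

Definition vget (i : nat) {k} (v : Vector.t nat k) : nat := nth i (Vector.to_list v) 0.

Definition std (x : cantor) : structure arith_sig :=
  fun s => match s return Vector.t nat (asym_arity s) -> bool with
  | BitSym n => fun _ => x n
  | ZeroSym => fun v => Nat.eqb (vget 0 v) 0
  | SuccSym => fun v => Nat.eqb (vget 1 v) (S (vget 0 v))
  | PlusSym => fun v => Nat.eqb (vget 2 v) (vget 0 v + vget 1 v)
  | TimesSym => fun v => Nat.eqb (vget 2 v) (vget 0 v * vget 1 v)
  | RealSym => fun v => x (vget 0 v)
  end.

Definition real_of (M : structure arith_sig) : cantor := fun n => M (BitSym n) vnil.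

Lemma iso_real_of M N : iso M N -> real_of M = real_of N.
Proof.
  intros [h [_ hMN]]. apply functional_extensionality. intro n.
  unfold real_of. rewrite hMN. reflexivity.
Qed.

Definition fZero a : so_formula arith_sig := @SRel arith_sig ZeroSym (vcons a vnil).
Definition fSucc a b : so_formula arith_sig := @SRel arith_sig SuccSym (vcons a (vcons b vnil)).
Definition fPlus a b c : so_formula arith_sig :=
  @SRel arith_sig PlusSym (vcons a (vcons b (vcons c vnil))).
Definition fTimes a b c : so_formula arith_sig :=
  @SRel arith_sig TimesSym (vcons a (vcons b (vcons c vnil))).
Definition fReal a : so_formula arith_sig := @SRel arith_sig RealSym (vcons a vnil).
Definition fBit n : so_formula arith_sig := @SRel arith_sig (BitSym n) vnil.
Definition fVar X a : so_formula arith_sig := SVar 1 X (vcons a vnil).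

(* Auxiliary variables; they avoid variable [1] and the even variables, which
   the translation [tr] below reserves. *)
Definition temp (j : nat) : nat := 2 * j + 3.

Lemma temp_inj i j : temp i = temp j -> i = j.
Proof. unfold temp. lia. Qed.

Fixpoint is_numeral (n y : nat) : so_formula arith_sig :=
  match n with
  | 0 => fZero y
  | S n => SEx (temp n) (SAnd (is_numeral n (temp n)) (fSucc (temp n) y))
  end.

Definition ax_zero := SEx 0 (fZero 0).
Definition ax_zero_unique := SAll1 0 (SAll1 1 (SImp (SAnd (fZero 0) (fZero 1)) (SEq 0 1))).
Definition ax_succ_total := SAll1 0 (SEx 1 (fSucc 0 1)).
Definition ax_succ_functional :=
  SAll1 0 (SAll1 1 (SAll1 2 (SImp (SAnd (fSucc 0 1) (fSucc 0 2)) (SEq 1 2)))).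
Definition ax_succ_inj :=
  SAll1 0 (SAll1 1 (SAll1 2 (SImp (SAnd (fSucc 0 2) (fSucc 1 2)) (SEq 0 1)))).
Definition ax_succ_nonzero := SAll1 0 (SAll1 1 (SImp (fZero 1) (SNot (fSucc 0 1)))).
Definition ax_induction :=
  SAll2 1 0 (SImp (SAnd (SAll1 0 (SImp (fZero 0) (fVar 0 0)))
                        (SAll1 0 (SAll1 1 (SImp (SAnd (fVar 0 0) (fSucc 0 1)) (fVar 0 1)))))
                  (SAll1 0 (fVar 0 0))).
Definition ax_plus_zero :=
  SAll1 0 (SAll1 1 (SAll1 2 (SImp (fZero 1) (SIff (fPlus 0 1 2) (SEq 0 2))))).
Definition ax_plus_succ :=
  SAll1 0 (SAll1 1 (SAll1 2 (SAll1 3 (SImp (fSucc 1 2)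
    (SIff (fPlus 0 2 3) (SEx 4 (SAnd (fPlus 0 1 4) (fSucc 4 3)))))))).
Definition ax_times_zero :=
  SAll1 0 (SAll1 1 (SAll1 2 (SImp (fZero 1) (SIff (fTimes 0 1 2) (fZero 2))))).
Definition ax_times_succ :=
  SAll1 0 (SAll1 1 (SAll1 2 (SAll1 3 (SImp (fSucc 1 2)
    (SIff (fTimes 0 2 3) (SEx 4 (SAnd (fTimes 0 1 4) (fPlus 4 0 3)))))))).
Definition bit_link n :=
  SAll1 1 (SImp (is_numeral n 1) (SIff (fReal 1) (fBit n))).

Definition arith_axiom (psi : so_formula arith_sig) : Prop :=
  psi = ax_zero \/ psi = ax_zero_unique \/ psi = ax_succ_total \/ psi = ax_succ_functional \/
  psi = ax_succ_inj \/ psi = ax_succ_nonzero \/ psi = ax_induction \/ psi = ax_plus_zero \/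
  psi = ax_plus_succ \/ psi = ax_times_zero \/ psi = ax_times_succ \/ exists n, psi = bit_link n.

Lemma not_all_not_ex (P : nat -> Prop) : ~ (forall a, ~ P a) <-> exists a, P a.
Proof.
  split.
  - intro H. apply NNPP. intro H'. apply H. intros a Ha. apply H'. eauto.
  - intros [a Ha] H. exact (H a Ha).
Qed.

Section Categoricity.
Variable M : structure arith_sig.
Hypothesis M_arith : forall psi, arith_axiom psi -> forall e1 e2, so_sat M e1 e2 psi.

Definition isZero a := M ZeroSym (vcons a vnil) = true.
Definition isSucc a b := M SuccSym (vcons a (vcons b vnil)) = true.
Definition isPlus a b c := M PlusSym (vcons a (vcons b (vcons c vnil))) = true.
Definition isTimes a b c := M TimesSym (vcons a (vcons b (vcons c vnil))) = true.

Ltac use_axiom H ax :=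
  pose proof (M_arith ax ltac:(unfold arith_axiom; tauto) (fun _ => 0) (fun _ _ _ => False)) as H;
  unfold ax, SEx, SImp, SIff, fZero, fSucc, fPlus, fTimes, fVar in H;
  simpl in H; unfold upd1 in H; simpl in H.

Lemma zero_exists : exists a, isZero a.
Proof. use_axiom H ax_zero. apply not_all_not_ex. exact H. Qed.

Lemma zero_unique a b : isZero a -> isZero b -> a = b.
Proof. use_axiom H ax_zero_unique. intros Ha Hb. apply NNPP. intro. apply (H a b). auto. Qed.

Lemma succ_total a : exists b, isSucc a b.
Proof. use_axiom H ax_succ_total. apply not_all_not_ex. exact (H a). Qed.

Lemma succ_functional a b c : isSucc a b -> isSucc a c -> b = c.
Proof. use_axiom H ax_succ_functional. intros Hb Hc. apply NNPP. intro. apply (H a b c). auto. Qed.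

Lemma succ_inj a b c : isSucc a c -> isSucc b c -> a = b.
Proof. use_axiom H ax_succ_inj. intros Ha Hb. apply NNPP. intro. apply (H a b c). auto. Qed.

Lemma succ_nonzero a b : isZero b -> ~ isSucc a b.
Proof. use_axiom H ax_succ_nonzero. intros Hb Hab. apply (H a b). auto. Qed.

Lemma arith_induction (Q : nat -> Prop) :
  (forall a, isZero a -> Q a) -> (forall a b, Q a -> isSucc a b -> Q b) -> forall a, Q a.
Proof.
  use_axiom H ax_induction. intros HZ HS. specialize (H (fun v => Q (Vector.hd v))).
  rewrite !upd2_same_arity in H. simpl in H.
  apply NNPP. intro Hn. apply H. split; [split|].
  - intros a [Ha Hb]. apply Hb. auto.
  - intros a b [[Ha Hab] Hb]. apply Hb. eauto.
  - exact Hn.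
Qed.

Lemma plus_zero a b c : isZero b -> (isPlus a b c <-> a = c).
Proof.
  use_axiom H ax_plus_zero. specialize (H a b c). intro Hb. unfold isPlus.
  split; intro; apply NNPP; intro; apply H; tauto.
Qed.

Lemma plus_succ a b b' c' :
  isSucc b b' -> (isPlus a b' c' <-> exists c, isPlus a b c /\ isSucc c c').
Proof.
  use_axiom H ax_plus_succ. specialize (H a b b' c'). intro Hb. unfold isPlus, isSucc in *.
  rewrite not_all_not_ex in H.
  destruct (classic (exists c, M PlusSym (vcons a (vcons b (vcons c vnil))) = true /\
                               M SuccSym (vcons c (vcons c' vnil)) = true));
  destruct (classic (M PlusSym (vcons a (vcons b' (vcons c' vnil))) = true)); tauto.
Qed.

Lemma times_zero a b c : isZero b -> (isTimes a b c <-> isZero c).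
Proof.
  use_axiom H ax_times_zero. specialize (H a b c). intro Hb. unfold isTimes, isZero in *.
  split; intro; apply NNPP; intro; apply H; tauto.
Qed.

Lemma times_succ a b b' c' :
  isSucc b b' -> (isTimes a b' c' <-> exists c, isTimes a b c /\ isPlus c a c').
Proof.
  use_axiom H ax_times_succ. specialize (H a b b' c'). intro Hb.
  unfold isTimes, isPlus, isSucc in *.
  rewrite not_all_not_ex in H.
  destruct (classic (exists c, M TimesSym (vcons a (vcons b (vcons c vnil))) = true /\
                               M PlusSym (vcons c (vcons a (vcons c' vnil))) = true));
  destruct (classic (M TimesSym (vcons a (vcons b' (vcons c' vnil))) = true)); tauto.
Qed.

Definition zero := proj1_sig (constructive_indefinite_description _ zero_exists).
Lemma zero_isZero : isZero zero.
Proof. exact (proj2_sig (constructive_indefinite_description _ zero_exists)). Qed.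

Definition succ a := proj1_sig (constructive_indefinite_description _ (succ_total a)).
Lemma succ_isSucc a : isSucc a (succ a).
Proof. exact (proj2_sig (constructive_indefinite_description _ (succ_total a))). Qed.

Lemma isZero_zero a : isZero a -> a = zero.
Proof. intro H. apply zero_unique; auto. apply zero_isZero. Qed.

Lemma isSucc_succ a b : isSucc a b -> b = succ a.
Proof. intro H. apply (succ_functional a); auto. apply succ_isSucc. Qed.

Fixpoint numeral n := match n with 0 => zero | S n => succ (numeral n) end.

Lemma numeral_inj n m : numeral n = numeral m -> n = m.
Proof.
  revert m. induction n; destruct m; simpl; intro E; auto.
  - exfalso. apply (succ_nonzero (numeral m) zero zero_isZero). rewrite E. apply succ_isSucc.
  - exfalso. apply (succ_nonzero (numeral n) zero zero_isZero). rewrite <- E. apply succ_isSucc.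
  - f_equal. apply IHn, (succ_inj _ _ (succ (numeral m))); [rewrite <- E|]; apply succ_isSucc.
Qed.

Lemma numeral_surj a : exists n, numeral n = a.
Proof.
  apply (arith_induction (fun a => exists n, numeral n = a)).
  - intros b Hb. exists 0. symmetry. apply isZero_zero. auto.
  - intros b c [n <-] Hbc. exists (S n). symmetry. apply isSucc_succ. auto.
Qed.

Definition numeral_inv a := proj1_sig (constructive_indefinite_description _ (numeral_surj a)).

Lemma numeral_numeral_inv a : numeral (numeral_inv a) = a.
Proof. exact (proj2_sig (constructive_indefinite_description _ (numeral_surj a))). Qed.

Lemma numeral_inv_numeral n : numeral_inv (numeral n) = n.
Proof. apply numeral_inj, numeral_numeral_inv. Qed.

Lemma isZero_numeral c : isZero (numeral c) <-> c = 0.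
Proof.
  split; [|intros ->; apply zero_isZero].
  intro H. apply numeral_inj, isZero_zero. auto.
Qed.

Lemma isSucc_numeral a b : isSucc (numeral a) (numeral b) <-> b = S a.
Proof.
  split; [|intros ->; apply succ_isSucc].
  intro H. apply numeral_inj, isSucc_succ. auto.
Qed.

Lemma isPlus_numeral a b c : isPlus (numeral a) (numeral b) (numeral c) <-> c = a + b.
Proof.
  revert c. induction b; intro c.
  - rewrite (plus_zero _ _ _ zero_isZero). split.
    + intro H. apply numeral_inj in H. lia.
    + intros ->. f_equal. lia.
  - rewrite (plus_succ _ _ _ _ (succ_isSucc (numeral b))). split.
    + intros [w [H1 H2]]. destruct (numeral_surj w) as [k <-].
      rewrite IHb in H1. rewrite isSucc_numeral in H2. lia.
    + intros ->. exists (numeral (a + b)). rewrite IHb, isSucc_numeral. split; lia.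
Qed.

Lemma isTimes_numeral a b c : isTimes (numeral a) (numeral b) (numeral c) <-> c = a * b.
Proof.
  revert c. induction b; intro c.
  - rewrite (times_zero _ _ _ zero_isZero), isZero_numeral. lia.
  - rewrite (times_succ _ _ _ _ (succ_isSucc (numeral b))), Nat.mul_succ_r. split.
    + intros [w [H1 H2]]. destruct (numeral_surj w) as [k <-].
      rewrite IHb in H1. rewrite isPlus_numeral in H2. lia.
    + intros ->. exists (numeral (a * b)). rewrite IHb, isPlus_numeral. split; lia.
Qed.

Lemma sat_is_numeral n y e1 e2 : (forall j, j < n -> y <> temp j) ->
  (so_sat M e1 e2 (is_numeral n y) <-> e1 y = numeral n).
Proof.
  revert y e1. induction n; intros y e1 Hy.
  - simpl. change (isZero (e1 y) <-> e1 y = zero). split.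
    + apply isZero_zero.
    + intros ->. apply zero_isZero.
  - unfold is_numeral; fold is_numeral. rewrite sat_SEx.
    assert (Hn : forall j, j < n -> temp n <> temp j) by (intros j Hj E; apply temp_inj in E; lia).
    assert (Hyn : y <> temp n) by (apply Hy; lia).
    split.
    + intros [a [H1 H2]]. rewrite IHn, upd1_same in H1 by exact Hn.
      change (isSucc (upd1 e1 (temp n) a (temp n)) (upd1 e1 (temp n) a y)) in H2.
      rewrite upd1_same, upd1_other in H2 by exact Hyn.
      subst a. simpl. apply isSucc_succ. auto.
    + intro E. exists (numeral n). split.
      * rewrite IHn by exact Hn. apply upd1_same.
      * change (isSucc (upd1 e1 (temp n) (numeral n) (temp n)) (upd1 e1 (temp n) (numeral n) y)).
        rewrite upd1_same, upd1_other by exact Hyn. rewrite E. apply succ_isSucc.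
Qed.

Lemma isReal_numeral n : M RealSym (vcons (numeral n) vnil) = M (BitSym n) vnil.
Proof.
  assert (Hax : arith_axiom (bit_link n)) by (do 11 right; exists n; reflexivity).
  pose proof (M_arith _ Hax (fun _ => 0) (fun _ _ _ => False) (numeral n)) as H.
  rewrite sat_SImp, sat_SIff, sat_is_numeral, upd1_same in H
    by (intros j Hj E; unfold temp in E; lia).
  specialize (H eq_refl). simpl in H. rewrite upd1_same in H.
  apply Bool.eq_iff_eq_true. exact H.
Qed.

Lemma arith_model_std s v : M s v = std (real_of M) s (Vector.map numeral_inv v).
Proof.
  assert (Hnum : forall a, exists n, a = numeral n)
    by (intro a; destruct (numeral_surj a) as [n <-]; eauto).
  destruct s; cbn in v;
    repeat match goal with
    | v : Vector.t nat 0 |- _ => rewrite (vector0_nil v) in *; clear v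
    | v : Vector.t nat (S _) |- _ =>
        let a := fresh "a" in let w := fresh "w" in
        destruct (vectorS_cons _ v) as [a [w ->]];
        destruct (Hnum a) as [? ->]
    end;
    simpl; unfold vget; simpl; rewrite ?numeral_inv_numeral;
    try apply Bool.eq_iff_eq_true; rewrite ?Nat.eqb_eq.
  all: first [ exact (iff_refl _) | apply isZero_numeral | apply isSucc_numeral
             | apply isPlus_numeral | apply isTimes_numeral
             | rewrite isReal_numeral; exact (iff_refl _) ].
Qed.

Lemma arith_model_iso_std : iso M (std (real_of M)).
Proof.
  exists numeral_inv. split.
  - exact (bijective_nat_of_inverse _ numeral numeral_numeral_inv numeral_inv_numeral).
  - exact arith_model_std.
Qed.
End Categoricity.

Section Standard.
Variable x : cantor.

Lemma sat_fZero e1 e2 a : so_sat (std x) e1 e2 (fZero a) <-> e1 a = 0.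
Proof. apply Nat.eqb_eq. Qed.
Lemma sat_fSucc e1 e2 a b : so_sat (std x) e1 e2 (fSucc a b) <-> e1 b = S (e1 a).
Proof. apply Nat.eqb_eq. Qed.
Lemma sat_fPlus e1 e2 a b c : so_sat (std x) e1 e2 (fPlus a b c) <-> e1 c = e1 a + e1 b.
Proof. apply Nat.eqb_eq. Qed.
Lemma sat_fTimes e1 e2 a b c : so_sat (std x) e1 e2 (fTimes a b c) <-> e1 c = e1 a * e1 b.
Proof. apply Nat.eqb_eq. Qed.
Lemma sat_fReal e1 e2 a : so_sat (std x) e1 e2 (fReal a) <-> x (e1 a) = true.
Proof. reflexivity. Qed.

Lemma sat_is_numeral_std n y e1 e2 : (forall j, j < n -> y <> temp j) ->
  (so_sat (std x) e1 e2 (is_numeral n y) <-> e1 y = n).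
Proof.
  revert y e1. induction n; intros y e1 Hy.
  - apply sat_fZero.
  - unfold is_numeral; fold is_numeral. rewrite sat_SEx.
    assert (Hn : forall j, j < n -> temp n <> temp j) by (intros j Hj E; apply temp_inj in E; lia).
    assert (Hyn : y <> temp n) by (apply Hy; lia).
    split.
    + intros [a [H1 H2]]. rewrite IHn, upd1_same in H1 by exact Hn.
      rewrite sat_fSucc, upd1_same, upd1_other in H2 by exact Hyn. lia.
    + intro E. exists n. split.
      * rewrite IHn by exact Hn. apply upd1_same.
      * rewrite sat_fSucc, upd1_same, upd1_other by exact Hyn. lia.
Qed.

Lemma std_bit_link n e1 e2 : so_sat (std x) e1 e2 (bit_link n).
Proof.
  intro a. rewrite sat_SImp, sat_SIff, sat_is_numeral_std, upd1_same
    by (intros j Hj E; unfold temp in E; lia).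
  intros ->. rewrite sat_fReal, upd1_same. reflexivity.
Qed.

Lemma std_arith_axiom psi : arith_axiom psi -> forall e1 e2, so_sat (std x) e1 e2 psi.
Proof.
  intros Hpsi e1 e2.
  unfold arith_axiom in Hpsi;
    repeat match type of Hpsi with _ \/ _ => destruct Hpsi as [Hpsi|Hpsi] end;
    try match type of Hpsi with ex _ => destruct Hpsi as [n ->]; apply std_bit_link end;
    subst psi;
    unfold ax_zero, ax_zero_unique, ax_succ_total, ax_succ_functional, ax_succ_inj,
      ax_succ_nonzero, ax_induction, ax_plus_zero, ax_plus_succ, ax_times_zero, ax_times_succ,
      SEx, SImp, SIff, fZero, fSucc, fPlus, fTimes, fVar;
    simpl; unfold upd1; simpl; unfold vget; simpl.
  - intro H. apply (H 0). reflexivity.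
  - intros a b [[H1 H2] H3]. apply Nat.eqb_eq in H1, H2. lia.
  - intros a H. apply (H (S a)). apply Nat.eqb_refl.
  - intros a b c [[H1 H2] H3]. apply Nat.eqb_eq in H1, H2. lia.
  - intros a b c [[H1 H2] H3]. apply Nat.eqb_eq in H1, H2. lia.
  - intros a b [H1 H2]. apply H2. intro H3. apply Nat.eqb_eq in H1, H3. lia.
  - intros R. rewrite !upd2_same_arity. simpl. intros [[H0 HS] Hn]. apply Hn. intro a.
    induction a; apply NNPP; intro Hc.
    + apply (H0 0). split; auto.
    + apply (HS a (S a)). split; [split|]; auto. apply Nat.eqb_refl.
  - intros a b c [H1 H2]. apply Nat.eqb_eq in H1; subst b. apply H2. split; intros [H3 H4].
    + apply Nat.eqb_eq in H3. lia.
    + apply H4. apply Nat.eqb_eq. lia.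
  - intros a b c d [H1 H2]. apply Nat.eqb_eq in H1. apply H2. split.
    + intros [H3 H4]. apply H4. intro H5. apply Nat.eqb_eq in H3. apply (H5 (a + b)).
      split; apply Nat.eqb_eq; lia.
    + intros [H3 H4]. apply H4. apply Nat.eqb_eq. apply NNPP. intro H6. apply H3.
      intros w [H7 H8]. apply Nat.eqb_eq in H7, H8. lia.
  - intros a b c [H1 H2]. apply Nat.eqb_eq in H1; subst b. rewrite Nat.mul_0_r in *.
    apply H2. split; intros [H3 H4]; apply H4; apply Nat.eqb_eq; apply Nat.eqb_eq in H3; lia.
  - intros a b c d [H1 H2]. apply Nat.eqb_eq in H1. subst c. rewrite Nat.mul_succ_r in *.
    apply H2. split.
    + intros [H3 H4]. apply H4. intro H5. apply Nat.eqb_eq in H3. apply (H5 (a * b)).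
      split; apply Nat.eqb_eq; lia.
    + intros [H3 H4]. apply H4. apply Nat.eqb_eq. apply NNPP. intro H6. apply H3.
      intros w [H7 H8]. apply Nat.eqb_eq in H7, H8. lia.
Qed.
End Standard.

Definition bind1 {sg} k (p r : nat -> so_formula sg) : so_formula sg :=
  SEx (temp k) (SAnd (p (temp k)) (r (temp k))).

Definition bind2 {sg} k (p q : nat -> so_formula sg) (r : nat -> nat -> so_formula sg) :
  so_formula sg :=
  SEx (temp k) (SEx (temp (S k))
    (SAnd (p (temp k)) (SAnd (q (temp (S k))) (r (temp k) (temp (S k)))))).

Section Binders.
Variables (sg : signature) (M : structure sg) (e1 : env1) (e2 : env2) (k : nat).

Lemma sat_bind1 p r m (Q : nat -> Prop) :
  (forall a, so_sat M (upd1 e1 (temp k) a) e2 (p (temp k)) <-> a = m) ->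
  (forall a, so_sat M (upd1 e1 (temp k) a) e2 (r (temp k)) <-> Q a) ->
  (so_sat M e1 e2 (bind1 k p r) <-> Q m).
Proof.
  intros Hp Hr. unfold bind1. rewrite sat_SEx. cbn [so_sat]. split.
  - intros [a [H1 H2]]. apply Hp in H1. subst a. apply Hr. exact H2.
  - intro H. exists m. rewrite Hp, Hr. auto.
Qed.

Lemma sat_bind2 p q r m n (Q : nat -> nat -> Prop) :
  let E a b := upd1 (upd1 e1 (temp k) a) (temp (S k)) b in
  (forall a b, so_sat M (E a b) e2 (p (temp k)) <-> a = m) ->
  (forall a b, so_sat M (E a b) e2 (q (temp (S k))) <-> b = n) ->
  (forall a b, so_sat M (E a b) e2 (r (temp k) (temp (S k))) <-> Q a b) ->
  (so_sat M e1 e2 (bind2 k p q r) <-> Q m n).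
Proof.
  intros E Hp Hq Hr. unfold bind2. rewrite sat_SEx. setoid_rewrite sat_SEx.
  cbn [so_sat]. split.
  - intros [a [b [H1 [H2 H3]]]]. apply Hp in H1. apply Hq in H2. subst. apply Hr. exact H3.
  - intro H. exists m, n. fold (E m n). rewrite Hp, Hq, Hr. auto.
Qed.
End Binders.

Definition mem (n : nat) (l : list nat) : bool := existsb (Nat.eqb n) l.

(* Number variable [n] of arithmetic, when bound, is variable [2 n]; variable [1]
   is tied to zero by [theta], which is the value of free number variables. *)
Definition num_var (bn : list nat) (n : nat) : nat := if mem n bn then 2 * n else 1.

(* [tr_term bn t k y] says that [y] is the value of [t]; it quantifies over
   [temp j] for [j >= k] only. *)
Fixpoint tr_term (bn : list nat) (t : aterm) (k y : nat) : so_formula arith_sig :=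
  match t with
  | AVar n => SEq y (num_var bn n)
  | AZero => fZero y
  | ASucc t => bind1 k (tr_term bn t (S k)) (fun a => fSucc a y)
  | APlus t u =>
      bind2 k (tr_term bn t (S (S k))) (tr_term bn u (S (S k))) (fun a b => fPlus a b y)
  | AMult t u =>
      bind2 k (tr_term bn t (S (S k))) (tr_term bn u (S (S k))) (fun a b => fTimes a b y)
  end.

Definition fLt (a b : nat) : so_formula arith_sig :=
  SEx (temp 2) (SAnd (fPlus a (temp 2) b) (SNot (fZero (temp 2)))).

(* A free set variable [0] denotes the real, the other free set variables the empty set. *)
Definition fMem (bs : list nat) (X z : nat) : so_formula arith_sig :=
  if mem X bs then fVar X z else if Nat.eqb X 0 then fReal z else SFalse.

Fixpoint tr (bn bs : list nat) (phi : aform) : so_formula arith_sig :=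
  match phi with
  | AEq t u => bind2 0 (tr_term bn t 2) (tr_term bn u 2) (fun a b => SEq a b)
  | ALt t u => bind2 0 (tr_term bn t 2) (tr_term bn u 2) fLt
  | AMem t X => bind1 0 (tr_term bn t 1) (fMem bs X)
  | ANot p => SNot (tr bn bs p)
  | AAnd p q => SAnd (tr bn bs p) (tr bn bs q)
  | AAllN n p => SAll1 (2 * n) (tr (n :: bn) bs p)
  | AAllS X p => SAll2 1 X (tr bn (X :: bs) p)
  end.

Definition theta (phi : aform) : so_formula arith_sig :=
  SAll1 1 (SImp (fZero 1) (tr nil nil phi)).

Definition env1_rel (bn : list nat) (e1 : env1) (ae1 : nat -> nat) :=
  e1 1 = 0 /\ forall n, if mem n bn then e1 (2 * n) = ae1 n else ae1 n = 0.

Definition real_env (x : cantor) : nat -> nat -> Prop :=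
  fun X n => if Nat.eqb X 0 then x n = true else False.

Definition env2_rel (x : cantor) (bs : list nat) (e2 : env2) (ae2 : nat -> nat -> Prop) :=
  forall X, if mem X bs then forall b, e2 1 X (vcons b vnil) <-> ae2 X b
            else forall n, ae2 X n <-> real_env x X n.

Lemma env1_rel_num_var bn e1 ae1 n : env1_rel bn e1 ae1 -> e1 (num_var bn n) = ae1 n.
Proof.
  intros [H1 H2]. specialize (H2 n). unfold num_var. destruct (mem n bn); congruence.
Qed.

Lemma env1_rel_temp bn e1 ae1 j a : env1_rel bn e1 ae1 -> env1_rel bn (upd1 e1 (temp j) a) ae1.
Proof.
  intros [H1 H2]. split.
  - rewrite upd1_other; auto. unfold temp. lia.
  - intro n. specialize (H2 n). destruct (mem n bn); auto.
    rewrite upd1_other; auto. unfold temp. lia.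
Qed.

Lemma env1_rel_cons bn e1 ae1 n a : env1_rel bn e1 ae1 ->
  env1_rel (n :: bn) (upd1 e1 (2 * n) a) (fun m => if Nat.eqb m n then a else ae1 m).
Proof.
  intros [H1 H2]. split.
  - rewrite upd1_other by lia. auto.
  - intro m. unfold mem; simpl. fold (mem m bn). rewrite (Nat.eqb_sym m n).
    destruct (Nat.eqb_spec n m) as [<-|Hnm]; simpl.
    + apply upd1_same.
    + specialize (H2 m). destruct (mem m bn); auto. rewrite upd1_other by lia. auto.
Qed.

Lemma env2_rel_cons x bs e2 ae2 X (R : Vector.t nat 1 -> Prop) (Y : nat -> Prop) :
  env2_rel x bs e2 ae2 -> (forall b, R (vcons b vnil) <-> Y b) ->
  env2_rel x (X :: bs) (@upd2 e2 1 X R) (fun Z => if Nat.eqb Z X then Y else ae2 Z).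
Proof.
  intros HS HR Z. unfold mem; simpl. fold (mem Z bs). rewrite upd2_same_arity.
  destruct (Nat.eqb_spec Z X); simpl; auto.
  apply HS.
Qed.

Ltac distinct_vars :=
  let E := fresh in intro E;
  first [ congruence
        | unfold temp in E; lia
        | match goal with Hy : forall j, _ -> ?y <> temp j |- _ =>
            first [ eapply Hy; [ | exact E ]; lia | eapply Hy; [ | exact (eq_sym E) ]; lia ] end ].

Ltac simpl_upd1 := repeat first [ rewrite upd1_same | rewrite upd1_other by distinct_vars ].

Ltac rewrite_correct H :=
  rewrite H by first [ repeat apply env1_rel_temp; eassumption | intros ? ?; distinct_vars ];
  simpl_upd1; reflexivity.

Section TranslationCorrect.
Variable x : cantor.

Lemma sat_fLt e1 e2 a b : a <> temp 2 -> b <> temp 2 ->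
  (so_sat (std x) e1 e2 (fLt a b) <-> e1 a < e1 b).
Proof.
  intros Ha Hb. unfold fLt. rewrite sat_SEx. cbn [so_sat].
  setoid_rewrite sat_fPlus. setoid_rewrite sat_fZero. split.
  - intros [d [Hd Hnz]]. revert Hd Hnz. simpl_upd1. lia.
  - intro Hlt. exists (e1 b - e1 a). simpl_upd1. lia.
Qed.

Lemma sat_fMem bs X z e1 e2 ae2 : env2_rel x bs e2 ae2 ->
  (so_sat (std x) e1 e2 (fMem bs X z) <-> ae2 X (e1 z)).
Proof.
  intro HS. specialize (HS X). unfold fMem. destruct (mem X bs).
  - apply HS.
  - rewrite HS. unfold real_env. destruct (Nat.eqb X 0).
    + apply sat_fReal.
    + split; [apply sat_SFalse | tauto].
Qed.

Lemma tr_term_correct t : forall bn k y e1 e2 ae1,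
  env1_rel bn e1 ae1 -> (forall j, k <= j -> y <> temp j) ->
  (so_sat (std x) e1 e2 (tr_term bn t k y) <-> e1 y = aeval ae1 t).
Proof.
  induction t; intros bn k y e1 e2 ae1 HR Hy; cbn [tr_term aeval].
  - cbn [so_sat]. rewrite (env1_rel_num_var _ _ _ _ HR). reflexivity.
  - apply sat_fZero.
  - apply sat_bind1 with (m := aeval ae1 t) (Q := fun a => e1 y = S a); intro a.
    + rewrite_correct IHt.
    + rewrite sat_fSucc. simpl_upd1. reflexivity.
  - apply sat_bind2 with (m := aeval ae1 t1) (n := aeval ae1 t2) (Q := fun a b => e1 y = a + b);
      intros a b.
    + rewrite_correct IHt1.
    + rewrite_correct IHt2.
    + rewrite sat_fPlus. simpl_upd1. reflexivity.
  - apply sat_bind2 with (m := aeval ae1 t1) (n := aeval ae1 t2) (Q := fun a b => e1 y = a * b);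
      intros a b.
    + rewrite_correct IHt1.
    + rewrite_correct IHt2.
    + rewrite sat_fTimes. simpl_upd1. reflexivity.
Qed.

Lemma tr_correct phi : forall bn bs e1 e2 ae1 ae2,
  env1_rel bn e1 ae1 -> env2_rel x bs e2 ae2 ->
  (so_sat (std x) e1 e2 (tr bn bs phi) <-> asat ae1 ae2 phi).
Proof.
  induction phi; intros bn bs e1 e2 ae1 ae2 HN HS; cbn [tr asat].
  - apply sat_bind2 with (m := aeval ae1 t) (n := aeval ae1 u) (Q := fun a b => a = b);
      intros a b.
    + rewrite_correct tr_term_correct.
    + rewrite_correct tr_term_correct.
    + cbn [so_sat]. simpl_upd1. reflexivity.
  - apply sat_bind2 with (m := aeval ae1 t) (n := aeval ae1 u) (Q := fun a b => a < b);
      intros a b.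
    + rewrite_correct tr_term_correct.
    + rewrite_correct tr_term_correct.
    + rewrite sat_fLt by distinct_vars. simpl_upd1. reflexivity.
  - apply sat_bind1 with (m := aeval ae1 t) (Q := ae2 X); intro a.
    + rewrite_correct tr_term_correct.
    + rewrite (sat_fMem _ _ _ _ _ _ HS). simpl_upd1. reflexivity.
  - cbn [so_sat]. rewrite (IHphi _ _ _ _ _ _ HN HS). tauto.
  - cbn [so_sat]. rewrite (IHphi1 _ _ _ _ _ _ HN HS), (IHphi2 _ _ _ _ _ _ HN HS). tauto.
  - split; intros H a.
    + exact (proj1 (IHphi _ _ _ _ _ _ (env1_rel_cons _ _ _ n a HN) HS) (H a)).
    + exact (proj2 (IHphi _ _ _ _ _ _ (env1_rel_cons _ _ _ n a HN) HS) (H a)).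
  - split.
    + intros H Y.
      specialize (H (fun v => Y (Vector.hd v))).
      rewrite (IHphi _ _ _ _ _ _ HN (env2_rel_cons _ _ _ _ X _ Y HS (fun b => iff_refl _))) in H.
      exact H.
    + intros H R.
      rewrite (IHphi _ _ _ _ _ _ HN (env2_rel_cons _ _ _ _ X R (fun b => R (vcons b vnil)) HS
                 (fun b => iff_refl _))).
      apply H.
Qed.

Lemma theta_correct phi :
  (forall e1 e2, so_sat (std x) e1 e2 (theta phi)) <-> asat (fun _ => 0) (real_env x) phi.
Proof.
  assert (HS : forall e2, env2_rel x nil e2 (real_env x)) by (intros e2 X n; reflexivity).
  assert (HN : forall e1 a, a = 0 -> env1_rel nil (upd1 e1 1 a) (fun _ => 0))
    by (intros e1 a ->; split; [apply upd1_same | reflexivity]).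
  split.
  - intro H. specialize (H (fun _ => 0) (fun _ _ _ => False) 0).
    rewrite sat_SImp, sat_fZero, upd1_same in H.
    rewrite <- (tr_correct _ _ _ _ _ _ _ (HN (fun _ => 0) 0 eq_refl) (HS (fun _ _ _ => False))).
    exact (H eq_refl).
  - intros H e1 e2 a. rewrite sat_SImp, sat_fZero, upd1_same. intro Ha.
    rewrite (tr_correct _ _ _ _ _ _ _ (HN e1 a Ha) (HS _)). exact H.
Qed.
End TranslationCorrect.

Definition bit_atom (i : nat) : atom arith_sig := existT _ (BitSym i : sym arith_sig) vnil.

Definition bit_atoms (n : nat) : list (atom arith_sig) := map bit_atom (seq 0 n).

Definition of_atoms (g : atom arith_sig -> bool) : structure arith_sig :=
  fun s v => g (existT _ s v).

Lemma agree_on_bit_atoms n M N :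
  agree_on (bit_atoms n) M N -> agree_upto n (real_of M) (real_of N).
Proof.
  intros H i Hi. apply (H (bit_atom i)). apply in_map, in_seq. lia.
Qed.

Lemma real_of_image_closed (P : structure arith_sig -> Prop) :
  closed_struct P -> closed_cantor (fun x => exists M, P M /\ real_of M = x).
Proof.
  intros P_closed x Hx. destruct (atom_countable arith_sig) as [code code_inj].
  destruct (closed_meets_nested_clopens _ code code_inj (fun g => P (of_atoms g)))
    with (R := fun n g => agree_upto n (real_of (of_atoms g)) x) (D := bit_atoms)
    as [g [Pg Rg]].
  - intros g Hg. apply P_closed. intro L. destruct (Hg L) as [h [Ph Eh]].
    exists (of_atoms h). split; auto. intros [s v] Ha. symmetry. apply (Eh _ Ha).
  - intros n m g Hnm Hm i Hi. apply Hm. lia.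
  - intros n g g' Eg Hg i Hi. rewrite <- (Hg i Hi).
    symmetry. apply (agree_on_bit_atoms n (of_atoms g) (of_atoms g')); auto.
    intros [s v] Ha. apply Eg. exact Ha.
  - intro n. destruct (Hx n) as [y [[M [PM <-]] Hy]].
    exists (fun a => M (projT1 a) (projT2 a)). split; [exact PM|].
    intros i Hi. symmetry. exact (Hy i Hi).
  - exists (of_atoms g). split; auto. apply functional_extensionality. intro i.
    apply (Rg (S i)). lia.
Qed.

Lemma real_of_image_no_isolated (P : structure arith_sig -> Prop) :
  no_isolated_struct P ->
  (forall M N, P M -> P N -> real_of M = real_of N -> M = N) ->
  no_isolated_cantor (fun x => exists M, P M /\ real_of M = x).
Proof.
  intros P_ni real_of_inj x [M [PM <-]] n.
  destruct (P_ni M PM (bit_atoms n)) as [N [PN [NM Hagree]]].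
  exists (real_of N). split; [eauto | split].
  - intro E. apply NM. apply real_of_inj; auto.
  - apply agree_on_bit_atoms. exact Hagree.
Qed.

Definition theory (phi : aform) (psi : so_formula arith_sig) : Prop :=
  arith_axiom psi \/ psi = theta phi.

Lemma real_of_std x : real_of (std x) = x.
Proof. reflexivity. Qed.

Lemma theory_model_iso_std phi M : so_model (theory phi) M -> iso M (std (real_of M)).
Proof.
  intro HM. apply arith_model_iso_std. intros psi Hpsi. apply HM. left. exact Hpsi.
Qed.

Lemma std_model_theory phi x :
  so_model (theory phi) (std x) <-> asat (fun _ => 0) (real_env x) phi.
Proof.
  rewrite <- theta_correct. split.
  - intro H. apply H. right. reflexivity.
  - intros H psi [Hpsi | ->].
    + apply std_arith_axiom. exact Hpsi.
    + exact H.
Qed.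

Lemma theory_model_real phi M :
  so_model (theory phi) M -> asat (fun _ => 0) (real_env (real_of M)) phi.
Proof.
  intro HM. apply (std_model_theory phi (real_of M)).
  exact (so_model_iso _ _ _ _ (theory_model_iso_std phi M HM) HM).
Qed.

Lemma theory_models_same_real_iso phi M N :
  so_model (theory phi) M -> so_model (theory phi) N -> real_of M = real_of N -> iso M N.
Proof.
  intros HM HN E. apply (iso_trans _ _ (std (real_of M))).
  - exact (theory_model_iso_std phi M HM).
  - rewrite E. exact (iso_sym _ _ _ (theory_model_iso_std phi N HN)).
Qed.

Theorem lemma1p12 :
  SecondOrderAbsoluteMorley ->
  forall A : cantor -> Prop, lightface_projective A ->
    card_le_aleph1 A \/ exists P : cantor -> Prop, perfect_cantor P /\ (forall x, P x -> A x).
Proof.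
  intros SOAM A [phi Hphi].
  assert (std_model : forall x, A x -> so_model (theory phi) (std x))
    by (intros x Ax; apply std_model_theory, Hphi, Ax).
  destruct (SOAM arith_sig (theory phi))
    as [[W [lt [Hlt [f Hf]]]] | [P [[[M0 PM0] [P_closed P_ni]] [P_models P_noniso]]]].
  - left. exists W, lt. split; [exact Hlt|]. exists (fun x => f (std x)).
    intros a b Ha Hb E. rewrite <- (real_of_std a), <- (real_of_std b).
    apply iso_real_of, Hf; auto.
  - right. exists (fun x => exists M, P M /\ real_of M = x). repeat split.
    + exists (real_of M0). eauto.
    + apply real_of_image_closed. exact P_closed.
    + apply real_of_image_no_isolated; [exact P_ni|].
      intros M N PM PN E. apply NNPP. intro NE. apply (P_noniso M N PM PN NE).
      apply (theory_models_same_real_iso phi); auto.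
    + intros x [M [PM <-]]. apply Hphi, theory_model_real, P_models, PM.
Qed.
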